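(* Let $\mathcal{S}_1,\dots,\mathcal{S}_n\subseteq\mathbb{R}^D$ be independent linear subspaces (i.e. $\sum_{\ell=1}^n d_\ell=\dim(\sum_\ell\mathcal{S}_\ell)$, $d_\ell=\dim\mathcal{S}_\ell$), and let $\mathcal{X}=\{\boldsymbol{x}_1,\dots,\boldsymbol{x}_N\}\subseteq\bigcup_\ell\mathcal{S}_\ell$ consist of unit-norm vectors such that each $\mathcal{S}_\ell$ contains at least $d_\ell$ points of $\mathcal{X}$ spanning $\mathcal{S}_\ell$. Let $k\ge\sum_{\ell=1}^n d_\ell$ and let $\mathcal{X}_0^{(k)}$ be the output of the farthest first search procedure: $\mathcal{X}_0^{(1)}=\{\boldsymbol{x}_j\}$ for an arbitrary (e.g. random) $j$, and for $i=1,\dots,k-1$, $\mathcal{X}_0^{(i+1)}=\mathcal{X}_0^{(i)}\cup\{\boldsymbol{x}\}$ where $\boldsymbol{x}\in\arg\max_{\boldsymbol{x}_j\in\mathcal{X}}f_\infty(\boldsymbol{x}_j,\mathcal{X}_0^{(i)})$. Then $\mathcal{X}_0^{(k)}$ contains at least $d_\ell$ linearly independent points from each $\mathcal{S}_\ell$, and with $\mathcal{X}_0=\mathcal{X}_0^{(k)}$ the problem defining $f_\infty(\boldsymbol{x}_j,\mathcal{X}_0^{(k)})$ is feasible for every $\boldsymbol{x}_j\in\mathcal{X}$ and all of its optimal solutions are subspace-preserving.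
   Context: For $\mathcal{X}_0\subseteq\mathcal{X}$ and $\boldsymbol{x}_j\in\mathcal{X}$, $f_\infty(\boldsymbol{x}_j,\mathcal{X}_0):=\min_{\boldsymbol{c}\in\mathbb{R}^N}\|\boldsymbol{c}\|_1$ subject to $\boldsymbol{x}_j=\sum_{i:\boldsymbol{x}_i\in\mathcal{X}_0}c_i\boldsymbol{x}_i$, with $f_\infty(\boldsymbol{x}_j,\mathcal{X}_0):=\infty$ if infeasible. A vector $\boldsymbol{c}\in\mathbb{R}^N$ associated with $\boldsymbol{x}_j$ is subspace-preserving if $c_i\neq0$ implies that $\boldsymbol{x}_i$ and $\boldsymbol{x}_j$ lie in the same subspace $\mathcal{S}_\ell$. *)

From HB Require Import structures.
From mathcomp Require Import all_boot all_order all_algebra.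
From mathcomp Require Import boolp classical_sets reals constructive_ereal ereal.
Set Implicit Arguments. Unset Strict Implicit. Unset Printing Implicit Defensive.
Import Order.TTheory GRing.Theory Num.Theory.
Local Open Scope ring_scope.
Local Open Scope classical_set_scope.

Section Defs.
Variables (R : realType) (D N : nat).

Definition feasible (x : 'I_N -> 'rV[R]_D) (X0 : {set 'I_N}) (v : 'rV[R]_D)
  (c : 'I_N -> R) : Prop :=
  v = \sum_(i in X0) c i *: x i.

Definition l1norm (c : 'I_N -> R) : R := \sum_i `|c i|.

(* f_infty(v, X0) = min ||c||_1 over feasible c; +oo if infeasible
   (ereal_inf of the empty set is +oo). *)
Definition f_infty (x : 'I_N -> 'rV[R]_D) (X0 : {set 'I_N}) (v : 'rV[R]_D)
  : \bar R :=
  ereal_inf [set (l1norm c)%:E | c in feasible x X0 v].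

Definition optimal (x : 'I_N -> 'rV[R]_D) (X0 : {set 'I_N}) (v : 'rV[R]_D)
  (c : 'I_N -> R) : Prop :=
  feasible x X0 v c /\ forall c', feasible x X0 v c' -> l1norm c <= l1norm c'.

Definition subspace_preserving (n : nat) (S : 'I_n -> {vspace 'rV[R]_D})
  (x : 'I_N -> 'rV[R]_D) (j : 'I_N) (c : 'I_N -> R) : Prop :=
  forall i, c i != 0 -> exists l, (x i \in S l) && (x j \in S l).

Definition unit_norm (v : 'rV[R]_D) : Prop := \sum_i (v 0 i) ^+ 2 = 1.

(* X0^{(i)} in the farthest first search: the indices selected at steps
   0 .. i-1. *)
Definition ffs_set (sel : nat -> 'I_N) (i : nat) : {set 'I_N} :=
  [set sel (nat_of_ord m) | m : 'I_i].

End Defs.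

From HB Require Import structures.
From mathcomp Require Import boolp classical_sets reals constructive_ereal ereal.
From mathcomp Require Import all_boot all_order all_algebra.
Set Implicit Arguments. Unset Strict Implicit. Unset Printing Implicit Defensive.
Import Order.TTheory GRing.Theory Num.Theory.
Local Open Scope ring_scope.

(* f_infty(v, X0) is finite exactly when v lies in the span of X0. Hence, as
   long as X0 does not span all the data, the farthest first search picks a
   point outside span X0 and the dimension of the span grows by one. Since all
   data lie in sum_l S_l, of dimension sum_l d_l <= k, after k steps X0 spans
   every S_l. Independence of the S_l makes the S_l-component of any
   representation of a point of S_l equal to the point itself. Thus the selected
   points of S_l span S_l, and contain d_l independent ones; and keeping only
   the coefficients of the points in the subspace of x_j keeps a representation
   of x_j feasible without increasing its l1 norm, so an optimal representation
   has no other nonzero coefficients. *)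

Section IndexedSpan.
Variables (K : fieldType) (vT : vectType K) (I : finType) (x : I -> vT).

Implicit Types (A B : {set I}) (v : vT).

Definition span_of A : {vspace vT} := <<[seq x i | i in A]>>%VS.

Lemma span_ofE A : span_of A = (\sum_(i in A) <[x i]>)%VS.
Proof. by rewrite /span_of span_def big_map big_enum. Qed.

Lemma mem_span_of A i : i \in A -> x i \in span_of A.
Proof. by move=> iA; apply/memv_span/image_f. Qed.

Lemma span_ofS A B : A \subset B -> (span_of A <= span_of B)%VS.
Proof.
by move=> /subsetP AB; apply/span_subvP => _ /imageP[i /AB iB ->]; apply: mem_span_of.
Qed.

Lemma span_of0 : span_of set0 = 0%VS.
Proof. by rewrite span_ofE big_set0. Qed.

Lemma span_ofU1 j A : span_of (j |: A) = (<[x j]> + span_of A)%VS.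
Proof.
rewrite /span_of -span_cons; apply: eq_span => v; rewrite in_cons.
apply/imageP/predU1P => [[i /setU1P[-> | iA] ->] | [-> | /imageP[i iA ->]]].
- by left.
- by right; apply: image_f.
- by exists j; rewrite ?setU11.
- by exists i; rewrite ?setU1r.
Qed.

Lemma memv_span_ofP A v :
  reflect (exists c : I -> K, v = \sum_(i in A) c i *: x i) (v \in span_of A).
Proof.
rewrite span_ofE; apply: (iffP memv_sumP) => [[vs vs_line ->] | [c ->]].
  have /choice[c vsE] : forall i, exists r : K, i \in A -> vs i = r *: x i.
    move=> i; have [iA | _] := boolP (i \in A); last by exists 0.
    by have /vlineP[r ->] := vs_line i iA; exists r.
  by exists c; apply: eq_bigr => i /vsE.
by exists (fun i => c i *: x i) => // i _; apply/vlineP; exists (c i).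
Qed.

Lemma free_subset_span A :
  exists2 C : {set I}, C \subset A & span_of C = span_of A /\ free [seq x i | i in C].
Proof.
elim: {A}_.+1 {-2}A (ltnSn #|A|) => // m IHm A.
have [-> _ | [j jA]] := set_0Vmem A.
  by exists set0; rewrite // /image_mem enum_set0 nil_free.
rewrite (cardsD1 j) jA ltnS => /IHm[C CA [spanC freeC]].
have jC : j \notin C by apply/negP => /(subsetP CA); rewrite setD11.
have AE : A = j |: (A :\ j) by rewrite setD1K.
have [xj_in | xj_out] := boolP (x j \in span_of C).
  exists C; first exact: subset_trans CA (subD1set A j).
  by rewrite AE span_ofU1 -spanC; split=> //; apply/esym/addv_idPr; rewrite -memvE.
exists (j |: C); first by rewrite AE setUS.
split; first by rewrite AE !span_ofU1 spanC.
have /perm_free -> : perm_eq [seq x i | i in j |: C] (x j :: [seq x i | i in C]).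
  rewrite /image_mem -map_cons; apply/perm_map/uniq_perm; rewrite /= ?enum_uniq ?mem_enum ?jC //.
  by move=> i; rewrite in_cons !mem_enum in_setU1.
by rewrite free_cons freeC andbT.
Qed.

End IndexedSpan.

Section IndependentSubspaces.
Variables (K : fieldType) (vT : vectType K) (n : nat) (S : 'I_n -> {vspace vT}).
Hypothesis S_direct : directv (\sum_(l < n) S l).

Lemma directv_sum_component (u : 'I_n -> vT) l0 :
  (forall l, u l \in S l) -> \sum_l u l \in S l0 -> \sum_l u l = u l0.
Proof.
move=> Su sum_in.
pose w l := if l == l0 then \sum_l u l else 0.
have Sw l : w l \in S l by rewrite /w; case: eqVneq => [-> | _]; rewrite ?mem0v.
have sum_w : \sum_l w l = \sum_l u l by rewrite /w -big_mkcond big_pred1_eq.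
move/directv_sum_unique: S_direct => /(_ u w (fun l _ => Su l) (fun l _ => Sw l)).
by rewrite sum_w eqxx => /esym/forall_inP/(_ l0 isT); rewrite /w eqxx => /eqP.
Qed.

Variables (I : finType) (x : I -> vT) (lab : I -> 'I_n).
Hypothesis x_lab : forall i, x i \in S (lab i).

Lemma directv_sum_label (A : {set I}) (c : I -> K) l0 :
  \sum_(i in A) c i *: x i \in S l0 ->
  \sum_(i in A) c i *: x i = \sum_(i in A | lab i == l0) c i *: x i.
Proof.
rewrite (partition_big lab xpredT) //= => /directv_sum_component -> //.
by move=> l; apply: memv_suml => i /andP[_ /eqP <-]; apply/memvZ.
Qed.

Lemma span_of_label (A : {set I}) l :
  (S l <= span_of x A)%VS -> span_of x [set i in A | lab i == l] = S l.
Proof.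
move=> /subvP Sl_sub; apply/eqP; rewrite eqEsubv; apply/andP; split.
  by apply/span_subvP => _ /imageP[i + ->]; rewrite inE => /andP[_ /eqP <-].
apply/subvP => v Slv; have /memv_span_ofP[c vE] := Sl_sub v Slv.
apply/memv_span_ofP; exists c; rewrite vE (directv_sum_label (l0 := l)) -?vE //.
by apply: eq_bigl => i; rewrite inE.
Qed.

End IndependentSubspaces.

Lemma ler_sum_eq (R : numDomainType) (I : finType) (F G : I -> R) :
  (forall i, F i <= G i) -> \sum_i G i <= \sum_i F i -> forall i, F i = G i.
Proof.
move=> FG GF i; have [_] := leif_sum (fun i (_ : true) => leif_eq (FG i)).
by rewrite eq_le GF ler_sum // => /esym/forall_inP/(_ i isT)/eqP.
Qed.

Section FeasibleProblem.
Variables (R : realType) (D N : nat) (x : 'I_N -> 'rV[R]_D).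

Lemma f_infty_eq_pinfty X0 v : f_infty x X0 v = +oo%E <-> v \notin span_of x X0.
Proof.
split => [f_oo | v_out].
  apply/memv_span_ofP => -[c c_feas].
  have : (f_infty x X0 v <= (l1norm c)%:E)%E by apply: ereal_inf_lbound; exists c.
  by rewrite f_oo leye_eq.
rewrite /f_infty -[RHS](ereal_inf0 R); congr ereal_inf.
by apply/seteqP; split=> // y [c c_feas _]; apply/(negP v_out)/memv_span_ofP; exists c.
Qed.

Variables (n : nat) (S : 'I_n -> {vspace 'rV[R]_D}) (lab : 'I_N -> 'I_n).
Hypothesis S_direct : directv (\sum_(l < n) S l).
Hypothesis x_lab : forall i, x i \in S (lab i).

Lemma optimal_support_label X0 j c :
  optimal x X0 (x j) c -> forall i, c i != 0 -> lab i = lab j.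
Proof.
move=> [c_feas c_min] i ci.
pose c' i := if lab i == lab j then c i else 0.
have c'_feas : feasible x X0 (x j) c'.
  rewrite /feasible {1}c_feas (directv_sum_label S_direct x_lab (l0 := lab j)) -?c_feas //.
  by rewrite big_mkcondr; apply: eq_bigr => m _; rewrite /c'; case: ifP; rewrite ?scale0r.
have c'_le m : `|c' m| <= `|c m| by rewrite /c'; case: ifP; rewrite ?normr0.
have := ler_sum_eq c'_le (c_min c' c'_feas) i.
by rewrite /c'; case: eqP => // _ /esym/eqP; rewrite normr0 normr_eq0 (negPf ci).
Qed.

End FeasibleProblem.

Lemma unit_norm_neq0 (R : realType) (D : nat) (v : 'rV[R]_D) : unit_norm v -> v != 0.
Proof.
move=> v_unit; apply/eqP => v0; move: v_unit; rewrite /unit_norm v0 big1 => [/eqP|i _].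
  by rewrite eq_sym oner_eq0.
by rewrite mxE expr0n.
Qed.

Section FarthestFirstSearch.
Variables (N : nat) (sel : nat -> 'I_N).

Lemma ffs_set0 : ffs_set sel 0 = set0.
Proof. by apply/setP => j; rewrite inE; apply/imsetP => -[[]]. Qed.

Lemma ffs_setS i : ffs_set sel i.+1 = sel i |: ffs_set sel i.
Proof.
apply/setP => j; rewrite in_setU1; apply/imsetP/predU1P => [[m _ ->] | [-> | /imsetP[m _ ->]]].
- have [lt_mi | ge_mi] := ltnP m i; first by right; apply/imsetP; exists (Ordinal lt_mi).
  by left; congr sel; apply/eqP; rewrite eqn_leq ge_mi -ltnS ltn_ord.
- by exists ord_max.
- by exists (widen_ord (leqnSn i) m).
Qed.

Variables (R : realType) (D : nat) (x : 'I_N -> 'rV[R]_D) (k : nat).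
Hypothesis x_neq0 : forall j, x j != 0.
Hypothesis sel_argmax : forall i, (1 <= i < k)%N -> forall j,
  (f_infty x (ffs_set sel i) (x j) <= f_infty x (ffs_set sel i) (x (sel i)))%E.

Let d := \dim (span_of x setT).

(* For i = 0 this is x_neq0; afterwards some x j lies outside the span, so
   f_infty(x j) = +oo forces f_infty(x (sel i)) = +oo. *)
Lemma ffs_sel_notin_span i :
  (i < k)%N -> (\dim (span_of x (ffs_set sel i)) < d)%N ->
  x (sel i) \notin span_of x (ffs_set sel i).
Proof.
case: i => [_ _ | i ik dim_lt]; first by rewrite ffs_set0 span_of0 memv0.
have [j xj_out] : exists j, x j \notin span_of x (ffs_set sel i.+1).
  apply/existsP; rewrite -negb_forall; apply: contraL dim_lt => /forallP all_in.
  by rewrite -leqNgt; apply/dimvS/span_subvP => _ /imageP[j _ ->].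
have f_oo : f_infty x (ffs_set sel i.+1) (x j) = +oo%E by apply/f_infty_eq_pinfty.
by apply/f_infty_eq_pinfty/eqP; rewrite -leye_eq -f_oo; apply: sel_argmax.
Qed.

Lemma ffs_dim_ge i : (i <= k)%N -> (minn i d <= \dim (span_of x (ffs_set sel i)))%N.
Proof.
elim: i => [|i IHi] ik; first by rewrite min0n.
have [d_le | dim_lt] := leqP d (\dim (span_of x (ffs_set sel i))).
  apply: leq_trans (geq_minr _ _) (leq_trans d_le (dimvS _)).
  by apply: span_ofS; rewrite ffs_setS subsetUr.
have i_le : (i <= \dim (span_of x (ffs_set sel i)))%N.
  by move: (IHi (ltnW ik)); rewrite geq_min [(d <= _)%N]leqNgt dim_lt orbF.
have dim_grows : (\dim (span_of x (ffs_set sel i)) < \dim (span_of x (ffs_set sel i.+1)))%N.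
  rewrite ffs_setS span_ofU1 (ltn_leqif (dimv_leqif_sup (addvSr _ _))) subv_add subvv andbT.
  by rewrite -memvE ffs_sel_notin_span.
exact: leq_trans (geq_minl _ _) (leq_ltn_trans i_le dim_grows).
Qed.

Lemma ffs_span_full : (d <= k)%N -> span_of x (ffs_set sel k) = span_of x setT.
Proof.
move=> d_le_k; apply/eqP; rewrite eqEdim span_ofS ?subsetT //=.
by have := ffs_dim_ge (leqnn k); rewrite (minn_idPr d_le_k).
Qed.

End FarthestFirstSearch.

Theorem theorem2 (R : realType) (D n N : nat)
  (S : 'I_n -> {vspace 'rV[R]_D}) (x : 'I_N -> 'rV[R]_D)
  (k : nat) (sel : nat -> 'I_N) :
  (* independent subspaces *)
  (\sum_(l < n) \dim (S l))%N = \dim (\sum_(l < n) S l)%VS ->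
  (* X is a set of N distinct unit-norm points in the union of the S_l *)
  injective x ->
  (forall j, unit_norm (x j)) ->
  (forall j, exists l, x j \in S l) ->
  (* each S_l contains (at least d_l) points of X spanning S_l *)
  (forall l, exists A : {set 'I_N},
      (forall j, j \in A -> x j \in S l) /\
      (<<[seq x j | j in A]>>)%VS = S l) ->
  (* k >= sum_l d_l (and k >= 1 so that X0^{(k)} is defined) *)
  (0 < k)%N ->
  (\sum_(l < n) \dim (S l) <= k)%N ->
  (* farthest first search: sel 0 arbitrary, then argmax of f_infty *)
  (forall i, (1 <= i < k)%N -> forall j,
      (f_infty x (ffs_set sel i) (x j) <= f_infty x (ffs_set sel i) (x (sel i)))%E) ->
  (* conclusion 1: d_l linearly independent points from each S_l *)
  (forall l, exists A : {set 'I_N},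
      [/\ A \subset ffs_set sel k,
          (forall j, j \in A -> x j \in S l),
          #|A| = \dim (S l) &
          free [seq x j | j in A]]) /\
  (* conclusion 2: feasibility, and optimal solutions are subspace-preserving *)
  (forall j, (exists c, feasible x (ffs_set sel k) (x j) c) /\
      (forall c, optimal x (ffs_set sel k) (x j) c ->
                 subspace_preserving S x j c)).
Proof.
move=> S_indep _ x_unit x_cover S_spanned _ k_ge sel_argmax.
have [lab x_lab] := choice x_cover.
have S_direct : directv (\sum_(l < n) S l) by apply/directvP; rewrite /= S_indep.
have X0_full : span_of x (ffs_set sel k) = span_of x setT.
  apply: (ffs_span_full (fun j => unit_norm_neq0 (x_unit j)) sel_argmax).
  apply: leq_trans k_ge; rewrite S_indep; apply/dimvS/span_subvP => _ /imageP[j _ ->].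
  by rewrite memvE (sumv_sup (lab j)) // -memvE.
have S_sub l : (S l <= span_of x (ffs_set sel k))%VS.
  by have [A [_ <-]] := S_spanned l; rewrite X0_full; apply/span_ofS/subsetT.
split=> [l | j].
  have [C CX0l [spanC freeC]] := free_subset_span x [set i in ffs_set sel k | lab i == l].
  have C_lab i : i \in C -> lab i = l by move/(subsetP CX0l); rewrite inE => /andP[_ /eqP].
  exists C; split=> //.
  - by apply: subset_trans CX0l _; apply/subsetP => i; rewrite inE => /andP[].
  - by move=> i /C_lab <-.
  - move/eqP: freeC; rewrite size_map -cardE => <-.
    by rewrite -/(span_of x C) spanC (span_of_label S_direct).
split=> [|c c_opt i ci]; first exact/memv_span_ofP/(subvP (S_sub (lab j)))/x_lab.
by exists (lab j); rewrite -{1}(optimal_support_label S_direct x_lab c_opt ci) !x_lab.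
Qed.
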